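(* Let $\Gamma,T,\ast$ and $W$ be as in the context. Then $W$ has no non-stationary closed paths; that is, there is no sequence of $p$-cells $\sigma_0,\sigma_1,\dots,\sigma_r$ of $\mathcal{UD}^n\Gamma$ with $\sigma_r=\sigma_0$, $\sigma_1\ne\sigma_0$, such that for each $i$, if $W(\sigma_i)$ is undefined then $\sigma_{i+1}=\sigma_i$, and otherwise $\sigma_{i+1}\neq\sigma_i$ and $\sigma_{i+1}$ is a face of $W(\sigma_i)$. Consequently $W$ is a discrete gradient vector field on $\mathcal{UD}^n\Gamma$.
   Context: $\Gamma$ is a finite connected graph and $n\ge1$; $d(v)$ is the degree of $v$. $\mathcal{UD}^n\Gamma$ is the cell complex whose cells are unordered $n$-element sets $c=\{c_1,\dots,c_n\}$ where each $c_i$ is a vertex or an edge of $\Gamma$ and the closed sets $c_i$ are pairwise disjoint; the dimension of $c$ is the number of edges in it, and faces are obtained by replacing edges by endpoints. Fix a maximal tree $T$ of $\Gamma$ and a vertex $\ast$ of degree $1$ in $T$. For vertices $v_1,v_2$, $v_1\wedge v_2$ is the endpoint other than $\ast$ of $[\ast,v_1]\cap[\ast,v_2]$ (geodesics in $T$), or $\ast$ if this is $\{\ast\}$. Directions (edges) at each vertex $v$ are labelled $0,\dots,d(v)-1$, label $0$ for the edge of $T$ towards $\ast$ (the direction from $\ast$ in $T$ gets label $1$); $g(v_1,v_2)$ is the label of the direction from $v_1$ on the $T$-geodesic to $v_2$, and $g(v,v)=0$. Order: $v_1\le v_2$ iff, with $v_3=v_1\wedge v_2$, $v_3=v_1$ or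 ($v_3\ne v_1$ and $g(v_3,v_1)<g(v_3,v_2)$); this is a linear order. For an edge $e$, $\iota(e)\ge\tau(e)$ are its endpoints; for $v\ne\ast$, $e(v)$ is the edge of $T$ at $v$ in direction $0$. A vertex $v\neq\ast$ of a cell $c$ is unblocked in $c$ if $e(v)$ is disjoint from every element of $c$ other than $v$; then the elementary reduction of $c$ from $v$ replaces $v$ by $e(v)$. Otherwise (and always for $v=\ast$) $v$ is blocked. The principal reduction of $c$ is the elementary reduction from the smallest unblocked vertex of $c$ (if any). Define $W$: for a $0$-cell $c$, $W(c)$ is its principal reduction if it exists; for $i>0$ and an $i$-cell $c$, $W(c)$ is its principal reduction if this exists and $c$ is not in the image of $W$ on $(i-1)$-cells; otherwise undefined. A discrete gradient vector field is an injective such assignment $W$ (from $i$-cells to $(i+1)$-cells having them as regular faces, with image and domain disjoint) admitting no non-stationary closed paths. *)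

From mathcomp Require Import all_boot.

Section UD.
Variables (V E : finType) (src tgt : E -> V).

(* A direction is an edge together with the endpoint it leaves from:
   (e,false) leaves src e towards tgt e, (e,true) leaves tgt e towards src e.
   A loop gives two directions at its vertex. *)
Definition dstart (d : E * bool) : V := if d.2 then tgt d.1 else src d.1.
Definition dend (d : E * bool) : V := if d.2 then src d.1 else tgt d.1.
Definition dirs_at (v : V) : {set E * bool} := [set d | dstart d == v].
Definition deg (v : V) : nat := #|dirs_at v|.

Fixpoint walk (A : {set E}) (a b : V) (ds : seq (E * bool)) : bool :=
  match ds with
  | [::] => a == b
  | d :: ds' => [&& d.1 \in A, dstart d == a & walk A (dend d) b ds']
  end.
Definition wverts (a : V) (ds : seq (E * bool)) : seq V := a :: map dend ds.
(* simple path (geodesic when A is a tree) from a to b *)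
Definition geod (A : {set E}) (a b : V) (ds : seq (E * bool)) : bool :=
  walk A a b ds && uniq (wverts a ds).
Definition is_cycle (A : {set E}) (ds : seq (E * bool)) : bool :=
  match ds with
  | [::] => false
  | d :: _ => [&& walk A (dstart d) (dstart d) ds, uniq (map fst ds)
                 & uniq (map dend ds)]
  end.
Definition connected (A : {set E}) : Prop :=
  forall a b : V, exists ds, walk A a b ds.
Definition spanning_tree (T : {set E}) : Prop :=
  connected T /\ forall ds, ~~ is_cycle T ds.

Variables (T : {set E}) (star : V) (lab : E * bool -> nat).

(* the labelling of directions: at each v <> star a bijection from the
   directions at v onto {0,..,d(v)-1} with 0 on the T-direction towards star;
   at star the T-direction gets label 1. *)
Definition valid_lab : Prop :=
  [/\ forall v, v != star ->
        {in dirs_at v &, injective lab} /\ (forall d, d \in dirs_at v -> lab d < deg v),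
      {in dirs_at star &, injective lab},
      (forall v d ds, v != star -> geod T v star (d :: ds) -> lab d = 0)
    & (forall d, dstart d = star -> d.1 \in T -> lab d = 1)].

Definition is_meet (v1 v2 w : V) : Prop :=
  exists ds1 ds2 dsw, [/\ geod T star v1 ds1, geod T star v2 ds2, geod T star w dsw
    & forall x, (x \in wverts star ds1) && (x \in wverts star ds2)
                = (x \in wverts star dsw)].

Definition gval (v1 v2 : V) (k : nat) : Prop :=
  (v1 = v2 /\ k = 0) \/ exists d ds, geod T v1 v2 (d :: ds) /\ lab d = k.

Definition vle (v1 v2 : V) : Prop :=
  exists v3, is_meet v1 v2 v3 /\
    (v3 = v1 \/ (v3 <> v1 /\ exists k1 k2, [/\ gval v3 v1 k1, gval v3 v2 k2 & k1 < k2])).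

(* cells of UD^n Gamma: sets of vertices/edges *)
Definition cl (x : V + E) : {set V} :=
  match x with inl v => [set v] | inr e => [set src e; tgt e] end.
Definition is_cell (n : nat) (c : {set V + E}) : Prop :=
  #|c| = n /\ forall x y, x \in c -> y \in c -> x != y -> [disjoint cl x & cl y].
Definition dim (c : {set V + E}) : nat := #|[set e : E | inr e \in c]|.

Definition face (c' c : {set V + E}) : Prop :=
  exists (S : {set E}) (b : E -> bool),
    (forall e, e \in S -> inr e \in c) /\
    c' = (c :\: [set (inr e : V + E) | e in S]) :|: [set (inl (dstart (e, b e)) : V + E) | e in S].

Definition replace_by (c : {set V + E}) (d : E * bool) : {set V + E} :=
  (c :\ inr d.1) :|: [set inl (dstart d)].
Definition regular_face (c' c : {set V + E}) : Prop :=
  #|[set d : E * bool | (inr d.1 \in c) && (c' == replace_by c d)]| = 1.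

Definition ev (v : V) (e : E) : Prop :=
  exists d, [/\ dstart d = v, lab d = 0, d.1 \in T & d.1 = e].
Definition unblocked (c : {set V + E}) (v : V) (e : E) : Prop :=
  [/\ v != star, inl v \in c, ev v e
    & forall x, x \in c -> x != inl v -> [disjoint cl (inr e) & cl x]].
Definition elred (c : {set V + E}) (v : V) (e : E) : {set V + E} :=
  (c :\ inl v) :|: [set inr e].
Definition principal (c c' : {set V + E}) : Prop :=
  exists v e, [/\ unblocked c v e, (forall w f, unblocked c w f -> vle v w)
                & c' = elred c v e].

Fixpoint Wi (n i : nat) (c c' : {set V + E}) : Prop :=
  [/\ is_cell n c, dim c = i, principal c c' &
     match i with
     | 0 => True
     | j.+1 => ~ exists c0, Wi n j c0 c
     end].
(* W c c' : W(c) is defined and equals c' *)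
Definition W (n : nat) (c c' : {set V + E}) : Prop := Wi n (dim c) c c'.

End UD.
Arguments dstart : clear implicits.
Arguments connected : clear implicits.
Arguments spanning_tree : clear implicits.
Arguments valid_lab : clear implicits.
Arguments W : clear implicits.

Section DGVF.
Variables (V E : finType) (src tgt : E -> V) (n : nat).
(* a partial assignment on cells of UD^n Gamma given as a relation R c c' *)
Variable R : {set V + E} -> {set V + E} -> Prop.

Definition wstep (s s' : {set V + E}) : Prop :=
  ((forall t, ~ R s t) /\ s' = s) \/
  (exists t, [/\ R s t, s' <> s & @face V E src tgt s' t]).

Definition nonstat_closed_path : Prop :=
  exists (p r : nat) (s : nat -> {set V + E}),
    [/\ 0 < r,
        (forall i, i <= r -> @is_cell V E src tgt n (s i) /\ @dim V E (s i) = p),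
        s r = s 0, s 1 <> s 0
      & forall i, i < r -> wstep (s i) (s i.+1)].

Definition dgvf : Prop :=
  [/\ (forall c c', R c c' ->
         [/\ @is_cell V E src tgt n c, @is_cell V E src tgt n c', @dim V E c' = (@dim V E c).+1
           & @regular_face V E src tgt c c']),
      (forall c c1 c2, R c c1 -> R c c2 -> c1 = c2),
      (forall c1 c2 c', R c1 c' -> R c2 c' -> c1 = c2),
      (forall a b c, R a b -> ~ R b c)
    & ~ nonstat_closed_path].
End DGVF.
Arguments wstep : clear implicits.
Arguments nonstat_closed_path : clear implicits.
Arguments dgvf : clear implicits.

(* Order vertices lexicographically by the labels along their T-geodesic from
   star; this is the order of the context, and it is total.  If two cells had
   the same W-image, collapsing both reduced edges of that image shows that the
   preimage with the larger principal vertex is itself in the image of W, so W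
   is injective.  For closed paths, weigh a vertex by twice its depth and an
   edge by twice the depth of its deeper endpoint, plus one unless it is some
   e(y).  This weight never increases along a step of a W-path, so it is
   constant on a closed path; then every step collapses some e(y) to y, and
   such a step strictly lowers the principal vertex, which cannot go on around
   a cycle. *)

From mathcomp Require Import all_boot all_order.
From Stdlib Require Import ClassicalEpsilon.
From mathcomp Require Import zify.
Set Implicit Arguments. Unset Strict Implicit. Unset Printing Implicit Defensive.
Import Order.TTheory.

Lemma disjointP (T : finType) (A B : {pred T}) :
  reflect (forall x, x \in A -> x \in B -> False) [disjoint A & B].
Proof.
apply: (iffP idP) => [AB x xA|H]; first by rewrite (disjointFr AB xA).
by apply/pred0P => x /=; apply/negP => /andP[]; apply: H.
Qed.

Lemma card_replace (T : finType) (A : {set T}) x y : x \in A -> y \notin A :\ x ->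
  #|(A :\ x) :|: [set y]| = #|A|.
Proof. by move=> xA yA; rewrite setUC cardsU1 yA (cardsD1 x A) xA. Qed.

Lemma nonincreasing_closed_const (a : nat -> nat) r :
  (forall i, i < r -> a i.+1 <= a i) -> a r = a 0 -> forall i, i < r -> a i.+1 = a i.
Proof.
move=> dec ar i ir.
have mono j k : j + k <= r -> a (j + k) <= a j.
  elim: k => [|k IH] jk; first by rewrite addn0.
  by rewrite addnS in jk *; apply: leq_trans (dec _ jk) (IH (ltnW jk)).
have := mono 0 i (ltnW ir); rewrite add0n.
have := mono i.+1 (r - i.+1); rewrite subnKC // ar => /(_ (leqnn r)).
by have := dec i ir; lia.
Qed.

Section Walks.
Variables (V E : finType) (src tgt : E -> V).
Local Notation D := (E * bool)%type.
Local Notation dstart := (dstart V E src tgt).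
Local Notation dend := (dend V E src tgt).
Local Notation walk := (walk V E src tgt).
Local Notation geod := (geod V E src tgt).
Local Notation wverts := (wverts V E src tgt).

Definition dflip (d : D) : D := (d.1, ~~ d.2).
Definition wrev (ds : seq D) : seq D := rev (map dflip ds).
Definition wend (a : V) (ds : seq D) : V := last a (map dend ds).

Lemma dstart_dflip d : dstart (dflip d) = dend d.
Proof. by case: d => e []. Qed.

Lemma dend_dflip d : dend (dflip d) = dstart d.
Proof. by case: d => e []. Qed.

Lemma dflipK : involutive dflip.
Proof. by case=> e b; rewrite /dflip /= negbK. Qed.

Lemma dir_eq d d' : d.1 = d'.1 -> dstart d = dstart d' -> src d.1 != tgt d.1 -> d = d'.
Proof.
case: d d' => f b [f' b'] /= <-.
by case: b b' => [] [] //; rewrite /dstart /= => ->; rewrite eqxx.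
Qed.

Lemma cl_dir d : cl V E src tgt (inr d.1) = [set dstart d; dend d].
Proof. by case: d => e [] //=; rewrite setUC. Qed.

Lemma wrevK : involutive wrev.
Proof.
by move=> ds; rewrite /wrev map_rev revK -map_comp map_id_in // => d _ /=; rewrite dflipK.
Qed.

Lemma size_wrev ds : size (wrev ds) = size ds.
Proof. by rewrite size_rev size_map. Qed.

Lemma wend_cat a s1 s2 : wend a (s1 ++ s2) = wend (wend a s1) s2.
Proof. by rewrite /wend map_cat last_cat. Qed.

Lemma mem_wend a ds : wend a ds \in wverts a ds.
Proof. exact: mem_last. Qed.

Lemma wverts_cat a s1 s2 : wverts a (s1 ++ s2) = wverts a s1 ++ map dend s2.
Proof. by rewrite /wverts map_cat. Qed.

Lemma walk_cat A a b s1 s2 :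
  walk A a b (s1 ++ s2) = walk A a (wend a s1) s1 && walk A (wend a s1) b s2.
Proof.
elim: s1 a => [|d s1 IH] a /=; first by rewrite eqxx.
by rewrite IH /wend /= !andbA.
Qed.

Lemma walk_wend A a b ds : walk A a b ds -> b = wend a ds.
Proof.
elim: ds a => [|d ds IH] a /=; first by move/eqP.
by case/and3P=> _ _ /IH.
Qed.

Lemma walk_wverts A a b ds : walk A a b ds -> wverts a ds = rcons (map dstart ds) b.
Proof.
elim: ds a => [|d ds IH] a /=; first by move/eqP->.
by case/and3P=> _ /eqP-> /IH /= <-.
Qed.

Lemma walk_wrev A a b ds : walk A a b ds -> walk A b a (wrev ds).
Proof.
elim: ds a => [|d ds IH] a /=; first by move/eqP->; rewrite /wrev /= eqxx.
case/and3P=> dA /eqP da w.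
rewrite /wrev /= rev_cons -cats1 walk_cat -/(wrev ds) -(walk_wend (IH _ w)) (IH _ w) /=.
by rewrite dA dstart_dflip eqxx dend_dflip da eqxx.
Qed.

Lemma wverts_wrev A a b ds : walk A a b ds -> wverts b (wrev ds) = rev (wverts a ds).
Proof.
move=> w; rewrite (walk_wverts w) rev_rcons /wverts /wrev map_rev -map_comp.
by congr (_ :: rev _); apply: eq_map => d /=; rewrite dend_dflip.
Qed.

Lemma geod_wrev A a b ds : geod A a b ds -> geod A b a (wrev ds).
Proof.
case/andP=> w u; apply/andP; split; first exact: walk_wrev.
by rewrite (wverts_wrev w) rev_uniq.
Qed.

Lemma geod_cat_split A a b s1 s2 : geod A a b (s1 ++ s2) ->
  geod A a (wend a s1) s1 /\ geod A (wend a s1) b s2.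
Proof.
case/andP; rewrite walk_cat wverts_cat cat_uniq => /andP[w1 w2] /and3P[u1 dis u2].
rewrite /geod w1 w2 u1 /wverts /= u2 andbT; split=> //; apply: contra dis => m.
by apply/hasP; exists (wend a s1) => //; apply: mem_wend.
Qed.

Lemma geod_cat A a c b s1 s2 : geod A a c s1 -> geod A c b s2 ->
  (forall x, x \in wverts a s1 -> x \notin map dend s2) -> geod A a b (s1 ++ s2).
Proof.
case/andP=> w1 u1 /andP[w2 u2] dis.
rewrite /geod walk_cat -(walk_wend w1) w1 w2 wverts_cat cat_uniq u1 /=.
move: u2; rewrite /wverts /= => /andP[_ ->]; rewrite andbT.
by apply/hasP=> -[x xs2 xs1]; move: (dis x xs1); rewrite xs2.
Qed.

Lemma mem_wverts_split a x ds : x \in wverts a ds ->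
  exists s1 s2, ds = s1 ++ s2 /\ wend a s1 = x.
Proof.
elim: ds a => [|d ds IH] a; first by rewrite inE => /eqP->; exists [::], [::].
rewrite /wverts /= inE => /orP[/eqP->|]; first by exists [::], (d :: ds).
by case/IH=> s1 [s2 [-> <-]]; exists (d :: s1), s2.
Qed.

Lemma nth_wverts a q i : i <= size q -> nth a (wverts a q) i = wend a (take i q).
Proof.
elim: q a i => [|d q IH] a [|i] //= hi.
by rewrite (set_nth_default (dend d)) /= ?size_map // -/(wverts (dend d) q) IH.
Qed.

Lemma geod_nil A a ds : geod A a a ds -> ds = [::].
Proof.
case: ds => // d ds /andP[/walk_wend ea]; rewrite /wverts /= => /andP[/negP[]].
by rewrite [X in X \in _]ea /wend /= mem_last.
Qed.

Lemma geod_of_walk A a b ds : walk A a b ds -> exists ds', geod A a b ds'.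
Proof.
elim: ds a => [|d ds IH] a /=; first by move=> ab; exists [::]; rewrite /geod /= ab.
case/and3P=> dA /eqP da /IH [q /andP[wq uq]].
case ain: (a \in wverts (dend d) q).
  case: (mem_wverts_split ain) => s1 [s2 [qe <-]].
  rewrite qe in wq uq; case: (@geod_cat_split A (dend d) b s1 s2) => [|_ g].
    by rewrite /geod wq uq.
  by exists s2.
exists (d :: q); rewrite /geod /= dA da eqxx wq.
by rewrite /wverts /= in ain uq *; rewrite ain uq.
Qed.

End Walks.

Section Sequences.
Variable T : eqType.
Implicit Types s t u : seq T.

Lemma prefix_anti s t : prefix s t -> prefix t s -> s = t.
Proof. by move=> + /size_prefix ts; rewrite prefixE take_oversize // => /eqP. Qed.

Fixpoint lcp s t : seq T :=
  match s, t with
  | x :: s', y :: t' => if x == y then x :: lcp s' t' else [::]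
  | _, _ => [::]
  end.

Lemma prefix_lcp u s t : prefix u (lcp s t) = prefix u s && prefix u t.
Proof.
elim: u s t => [|x u IH] [|y s] [|z t] //=; first by case: ifP.
  by rewrite andbF.
case: (eqVneq y z) => [<-|ne] /=; first by rewrite IH; case: (x == y).
by case: (eqVneq x y) => [->|] //=; rewrite (negbTE ne) andbF.
Qed.

Lemma lcp_split s t : exists r1 r2, [/\ s = lcp s t ++ r1, t = lcp s t ++ r2 &
  forall a b r1' r2', r1 = a :: r1' -> r2 = b :: r2' -> a != b].
Proof.
elim: s t => [|x s IH] [|y t] /=; [by exists [::], [::] | by exists [::], (y :: t) |
  by exists (x :: s), [::] |].
case: (eqVneq x y) => [<-|ne]; last by exists (x :: s), (y :: t); split=> // a b _ _ [<- _] [<- _].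
by case: (IH t) => r1 [r2 [e1 e2 H]]; exists r1, r2; split=> //; congr (_ :: _).
Qed.

End Sequences.

Lemma lexi_cat d d' (T : porderType d) (u s t : seqlexi_with d' T) :
  (u ++ s <= u ++ t :> seqlexi_with d' T)%O = (s <= t)%O.
Proof. by elim: u => //= x u IH; rewrite lexi_cons lexx IH. Qed.

Lemma exists_argmin (I : finType) d (T : orderType d) (F : I -> T) (Q : I -> Prop) :
  (exists y, Q y) -> exists y, Q y /\ forall y', Q y' -> (F y <= F y')%O.
Proof.
case=> y0 Qy0; pose q y : bool := excluded_middle_informative (Q y).
have qP y : reflect (Q y) (q y) by rewrite /q; case: excluded_middle_informative; constructor.
have [y /qP Qy ymin] := arg_minP F (introT (qP y0) Qy0).
by exists y; split=> // y' /qP /ymin.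
Qed.

Section Tree.
Variables (V E : finType) (src tgt : E -> V) (T : {set E}) (star : V)
  (lab : E * bool -> nat).
Local Notation dstart := (dstart V E src tgt).
Local Notation dend := (dend V E src tgt).
Local Notation walk := (walk V E src tgt).
Local Notation geod := (geod V E src tgt).
Local Notation wverts := (wverts V E src tgt).
Local Notation wend := (wend src tgt).

Hypothesis Tconn : connected V E src tgt T.
Hypothesis Hlab : valid_lab V E src tgt T star lab.

Lemma lab_inj d d' : dstart d = dstart d' -> lab d = lab d' -> d = d'.
Proof.
case: Hlab => Hv Hs _ _ e el.
have m1 : d \in dirs_at V E src tgt (dstart d) by rewrite inE.
have m2 : d' \in dirs_at V E src tgt (dstart d) by rewrite inE e.
case: (eqVneq (dstart d) star) => [ds|ns]; first by rewrite ds in m1 m2; apply: Hs.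
by case: (Hv _ ns) => inj _; apply: inj.
Qed.

Lemma lab_towards_star v d ds : v != star -> geod T v star (d :: ds) -> lab d = 0.
Proof. by case: Hlab => _ _ H _; apply: H. Qed.

Lemma lab_from_star d : dstart d = star -> d.1 \in T -> lab d = 1.
Proof. by case: Hlab => _ _ _ H; apply: H. Qed.

Lemma walk_lab_inj A a b b' s t : walk A a b s -> walk A a b' t ->
  map lab s = map lab t -> s = t.
Proof.
elim: s a t => [|d s IH] a [|d' t] //= /and3P[_ /eqP e1 w1] /and3P[_ /eqP e2 w2] [el em].
have ee := lab_inj (etrans e1 (esym e2)) el; subst d'.
by rewrite (IH _ _ w1 w2 em).
Qed.

Lemma geod_to_star_uniq v p q : geod T v star p -> geod T v star q -> p = q.
Proof.
elim: p v q => [|d p IH] v q; first by move=> /andP[/eqP-> _] /geod_nil.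
move=> gp; have /andP[/= /and3P[_ /eqP dv _] _] := gp.
case: (eqVneq v star) => [vs|ns]; first by rewrite vs in gp; move: (geod_nil gp).
case: q => [|d' q] gq; first by case/andP: gq => /= /eqP vs; rewrite vs eqxx in ns.
have /andP[/= /and3P[_ /eqP dv' _] _] := gq.
have ee : d = d'.
  by apply: lab_inj; rewrite ?dv ?dv' // (lab_towards_star ns gp) (lab_towards_star ns gq).
subst d'; congr (_ :: _).
have [_ g1] := @geod_cat_split _ _ src tgt T v star [:: d] p gp.
have [_ g2] := @geod_cat_split _ _ src tgt T v star [:: d] q gq.
exact: IH g1 g2.
Qed.

Lemma exists_tpath v : exists ds, geod T star v ds.
Proof. by case: (Tconn star v) => ds /geod_of_walk. Qed.

Definition tpath (v : V) : seq (E * bool) := xchoose (exists_tpath v).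
Definition depth (v : V) : nat := size (tpath v).

Lemma geod_tpath v : geod T star v (tpath v).
Proof. exact: xchooseP. Qed.

Lemma tpath_unique v p : geod T star v p -> p = tpath v.
Proof.
move=> g; apply: (inv_inj (@wrevK E)).
exact: geod_to_star_uniq (geod_wrev g) (geod_wrev (geod_tpath v)).
Qed.

Lemma wend_tpath v : wend star (tpath v) = v.
Proof. by have /andP[/walk_wend/esym e _] := geod_tpath v. Qed.

Lemma tpath_inj : injective tpath.
Proof. by move=> x y e; rewrite -(wend_tpath x) -(wend_tpath y) e. Qed.

Lemma tpath_prefix v s1 s2 : tpath v = s1 ++ s2 -> tpath (wend star s1) = s1.
Proof.
by move=> e; have := geod_tpath v; rewrite e => /geod_cat_split [/tpath_unique <- _].
Qed.

Lemma mem_tpath v x : (x \in wverts star (tpath v)) = prefix (tpath x) (tpath v).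
Proof.
apply/idP/prefixP => [|[s ->]]; last by rewrite wverts_cat mem_cat -{1}(wend_tpath x) mem_wend.
by case/mem_wverts_split=> s1 [s2 [e <-]]; exists s2; rewrite (tpath_prefix e).
Qed.

Lemma geod_leaves_tpath m v q : geod T m v q -> exists i x,
  [/\ i <= size q, x = wend m (take i q), prefix (tpath x) (tpath m)
    & tpath v = tpath x ++ drop i q].
Proof.
move=> gq; set Q := wverts m q.
pose J i := (i <= size q) && (nth m Q i \in wverts star (tpath m)).
have J0 : J 0 by rewrite /J /= -[X in X \in _](wend_tpath m) mem_wend.
have Jbound i : J i -> i <= size q by case/andP.
have [i /andP[iq]] := ex_maxnP (ex_intro J 0 J0) Jbound.
rewrite /Q nth_wverts // mem_tpath => xm imax; set x := wend m (take i q) in xm.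
exists i, x; split=> //.
have [_ g2] : geod T m x (take i q) /\ geod T x v (drop i q).
  by apply: geod_cat_split; rewrite cat_take_drop.
apply/esym/tpath_unique/(geod_cat (geod_tpath x) g2) => y; rewrite mem_tpath => yx.
apply/negP; rewrite map_drop => yq.
have jq : index y (drop i (map dend q)) < size q - i.
  by rewrite -(size_map dend) -size_drop index_mem.
suff /imax : J (i + index y (drop i (map dend q))).+1 by rewrite ltnNge leq_addr.
rewrite /J -ltn_subRL jq /Q /wverts /= -nth_drop nth_index // mem_tpath.
exact: prefix_trans xm.
Qed.

Lemma geod_from_tpath m v q : geod T m v q -> prefix (tpath m) (tpath v) ->
  q = drop (depth m) (tpath v).
Proof.
move=> gq /prefixP[s Pv]; have /andP[_ uq] := gq.
have [i [x [iq ex /prefixP[t Pm] Px]]] := geod_leaves_tpath gq.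
have dq : drop i q = t ++ s.
  by move: (congr1 (drop (size (tpath x))) Px); rewrite Pv Pm -catA !drop_size_cat.
have t0 : t = [::].
  case: t Pm dq => // a t Pm dq; move: uq; rewrite /wverts /= => /andP[/negP[]].
  have -> : m = wend x (a :: t) by rewrite -[in LHS](wend_tpath m) Pm wend_cat wend_tpath.
  rewrite -(cat_take_drop i q) dq map_cat mem_cat; apply/orP; right.
  by rewrite map_cat mem_cat /wend /= mem_last.
have xm : x = m by apply: tpath_inj; rewrite Pm t0 cats0.
have i0 : i = 0.
  apply/eqP; rewrite -(nth_uniq m _ _ uq) /= ?size_map ?ltnS //.
  by rewrite nth_wverts // -ex xm.
by move: dq; rewrite i0 drop0 t0 /depth Pv drop_size_cat.
Qed.

Lemma dstart_tpath_cat v m a r : tpath v = tpath m ++ a :: r -> dstart a = m.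
Proof.
move=> e; have := geod_tpath v; rewrite e => /geod_cat_split[_].
by rewrite wend_tpath => /andP[/and3P[_ /eqP]].
Qed.

Lemma is_meetE v1 v2 w :
  is_meet V E src tgt T star v1 v2 w <-> tpath w = lcp (tpath v1) (tpath v2).
Proof.
split=> [[ds1 [ds2 [dsw [g1 g2 gw meet]]]]|Pw]; last first.
  exists (tpath v1), (tpath v2), (tpath w); split; try exact: geod_tpath.
  by move=> x; rewrite !mem_tpath -prefix_lcp Pw.
rewrite (tpath_unique g1) (tpath_unique g2) (tpath_unique gw) in meet.
have [r1 [r2 [e1 _ _]]] := lcp_split (tpath v1) (tpath v2).
have PL := tpath_prefix e1; set L := lcp _ _ in e1 PL *.
have meetL x : prefix (tpath x) L = prefix (tpath x) (tpath w).
  by rewrite prefix_lcp -!mem_tpath meet.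
apply: prefix_anti; first by rewrite meetL prefix_refl.
by rewrite -[X in prefix X _]PL -meetL PL prefix_refl.
Qed.

Lemma gvalE m v r k : tpath v = tpath m ++ r ->
  gval V E src tgt T lab m v k <-> k = head 0 (map lab r).
Proof.
move=> Pv; split.
  case=> [[mv ->]|[d [ds [g <-]]]].
    by move/(congr1 size): Pv; rewrite mv size_cat -{1}(addn0 (size _)) => /addnI/esym/size0nil->.
  have := geod_from_tpath g; rewrite Pv prefix_prefix => /(_ isT).
  by rewrite /depth drop_size_cat // => <-.
case: r Pv => [|a r] Pv ->; first by left; split=> //; apply: tpath_inj; rewrite Pv cats0.
right; exists a, r; split=> //; have := geod_tpath v.
by rewrite Pv => /geod_cat_split[_]; rewrite wend_tpath.
Qed.

Definition key (v : V) : seqlexi nat := map lab (tpath v).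

Lemma key_inj : injective key.
Proof.
move=> x y e; apply: tpath_inj.
by have [/andP[w1 _] /andP[w2 _]] := (geod_tpath x, geod_tpath y); apply: walk_lab_inj w1 w2 e.
Qed.

Local Notation vle := (vle V E src tgt T star lab).

Lemma vle_key v1 v2 : vle v1 v2 <-> (key v1 <= key v2)%O.
Proof.
have [r1 [r2 [e1 e2 neq_heads]]] := lcp_split (tpath v1) (tpath v2).
set m := wend star (lcp (tpath v1) (tpath v2)).
have Pm : tpath m = lcp (tpath v1) (tpath v2) := tpath_prefix e1.
rewrite -Pm in e1 e2.
have meet w : is_meet V E src tgt T star v1 v2 w <-> w = m.
  by rewrite is_meetE -Pm; split=> [/tpath_inj|->].
have m_v1 : m = v1 <-> r1 = [::].
  split=> [mv|r0]; last by apply: tpath_inj; rewrite e1 r0 cats0.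
  by move/(congr1 size): e1; rewrite -mv size_cat -{1}(addn0 (size _)) => /addnI/esym/size0nil.
have lab_heads a b r1' r2' : r1 = a :: r1' -> r2 = b :: r2' -> lab a != lab b.
  move=> ra rb; apply: contra (neq_heads _ _ _ _ ra rb) => /eqP lab_ab.
  apply/eqP/(lab_inj _ lab_ab).
  by rewrite ra in e1; rewrite rb in e2; rewrite (dstart_tpath_cat e1) (dstart_tpath_cat e2).
clear neq_heads; rewrite /key e1 e2 !map_cat lexi_cat.
split=> [[_ [/meet -> [/m_v1 ->//|[/m_v1 r1n [k1 [k2 [g1 g2]]]]]]]|le].
  rewrite (gvalE _ e1) in g1; rewrite (gvalE _ e2) in g2; rewrite g1 g2.
  case: r1 e1 lab_heads r1n {g1 m_v1} => [//|a r1'] e1 lab_heads _.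
  case: r2 e2 lab_heads {g2} => [|b r2'] e2 lab_heads //=.
  by rewrite neqhead_lexiE // (lab_heads _ _ _ _ erefl erefl).
exists m; split; first exact/meet.
case: r1 e1 lab_heads m_v1 le => [|a r1'] e1 lab_heads m_v1 le.
  by left; apply/m_v1.
case: r2 e2 lab_heads le => [|b r2'] e2 lab_heads //= le.
right; split; first by move/m_v1.
exists (lab a), (lab b); split; [exact/(gvalE _ e1) | exact/(gvalE _ e2) |].
by move: le; rewrite neqhead_lexiE // (lab_heads _ _ _ _ erefl erefl).
Qed.

Lemma vle_refl v : vle v v.
Proof. exact/vle_key. Qed.

Lemma vle_trans a b c : vle a b -> vle b c -> vle a c.
Proof. by move=> /vle_key ab /vle_key bc; apply/vle_key/(le_trans ab bc). Qed.

Lemma vle_total a b : vle a b \/ vle b a.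
Proof. by case/orP: (le_total (key a) (key b)) => /vle_key; [left | right]. Qed.

Lemma vle_anti a b : vle a b -> vle b a -> a = b.
Proof. by move=> /vle_key ab /vle_key ba; apply/key_inj/le_anti; rewrite ab ba. Qed.

Lemma vle_min (Q : V -> Prop) :
  (exists y, Q y) -> exists y, Q y /\ forall y', Q y' -> vle y y'.
Proof.
case/(exists_argmin key) => y [Qy ymin].
by exists y; split=> // y' /ymin /vle_key.
Qed.

Local Notation ev := (ev V E src tgt T lab).
Local Notation cl := (cl V E src tgt).

Lemma ev_notstar y e : ev y e -> y != star.
Proof.
case=> d [dy l dT _]; apply/eqP => ys.
by move: l; rewrite (lab_from_star (etrans dy ys) dT).
Qed.

Lemma ev_endpoints y e : ev y e -> exists p, cl (inr e) = [set y; p] /\ depth p < depth y.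
Proof.
move=> ye; have ns := ev_notstar ye; case: ye => d [dy l _ <-].
have g := geod_wrev (geod_tpath y).
case wrev_y : (wrev (tpath y)) g => [|d' s] g.
  by case/andP: g => /= /eqP ys; rewrite ys eqxx in ns.
have dy' : dstart d' = y by case/andP: g => /= /and3P[_ /eqP].
have dd : d' = d by apply: lab_inj; rewrite ?dy ?dy' // l (lab_towards_star ns g).
subst d'; have [_ gs] := @geod_cat_split _ _ src tgt T y star [:: d] s g.
exists (dend d); rewrite cl_dir dy; split=> //.
by rewrite /depth -(tpath_unique (geod_wrev gs)) size_wrev -(size_wrev (tpath y)) wrev_y.
Qed.

Lemma ev_mem y e : ev y e -> y \in cl (inr e).
Proof. by case/ev_endpoints=> p [-> _]; rewrite !inE eqxx. Qed.

Lemma ev_noloop y e : ev y e -> src e != tgt e.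
Proof.
case/ev_endpoints=> p [ce hp]; apply/eqP => st.
have /eqP : #|[set y; p]| = 1 by rewrite -ce /= st setUid cards1.
by rewrite cards2 eqSS eqb0 negbK => /eqP yp; rewrite yp ltnn in hp.
Qed.

Lemma ev_inj y y' e : ev y e -> ev y' e -> y = y'.
Proof.
move=> /ev_endpoints [p [c1 h1]] /ev_endpoints [p' [c2 h2]].
have : y \in [set y'; p'] by rewrite -c2 c1 !inE eqxx.
rewrite !inE => /orP[/eqP//|/eqP yp].
have : y' \in [set y; p] by rewrite -c1 c2 !inE eqxx.
rewrite !inE => /orP[/eqP//|/eqP yp'].
by subst; move: (ltn_trans h1 h2); rewrite ltnn.
Qed.

Lemma ev_fun y e e' : ev y e -> ev y e' -> e = e'.
Proof.
by case=> d [dy l _ <-] [d' [dy' l' _ <-]]; rewrite (lab_inj (etrans dy (esym dy'))) ?l ?l'.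
Qed.

Lemma ev_other_endpoint u g (A B : {set V}) : ev u g -> u \notin A -> u \notin B ->
  [disjoint A & B] -> ~~ [disjoint cl (inr g) & A] -> [disjoint cl (inr g) & B].
Proof.
case/ev_endpoints=> p [-> _] uA uB AB nd; apply/disjointP => w wg wB.
move/negP: nd; apply; apply/disjointP => z zg zA.
have other x : x \in [set u; p] -> x \notin [set u] -> x = p.
  by rewrite !inE => /orP[/eqP->|/eqP//]; rewrite eqxx.
have wp : w = p by apply: (@other w wg); apply: contraNN uB; rewrite inE => /eqP<-.
have zp : z = p by apply: (@other z zg); apply: contraNN uA; rewrite inE => /eqP<-.
by subst; apply: (disjointP _ _ AB p zA wB).
Qed.

Section Cells.
Variable n : nat.
Local Notation X := (V + E)%type.
Local Notation cell := (is_cell V E src tgt n).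
Local Notation unbl := (unblocked V E src tgt T star lab).
Local Notation elred := (elred V E).
Local Notation dim := (dim V E).
Local Notation Wi := (Wi V E src tgt T star lab n).
Local Notation W := (W V E src tgt T star lab n).

Definition unred (c : {set X}) (e : E) (y : V) : {set X} := (c :\ inr e) :|: [set inl y].

Lemma mem_unred c e y x : (x \in unred c e y) = (x != inr e) && (x \in c) || (x == inl y).
Proof. by rewrite !inE. Qed.

Lemma mem_elred c v e x : (x \in elred c v e) = (x != inl v) && (x \in c) || (x == inr e).
Proof. by rewrite !inE. Qed.

Lemma inr_eq (a b : E) : (inr a == inr b :> X) = (a == b).
Proof. by apply/eqP/eqP => [[]|->]. Qed.

Lemma inl_eq (a b : V) : (inl a == inl b :> X) = (a == b).
Proof. by apply/eqP/eqP => [[]|->]. Qed.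

Lemma cell_disj c x y : cell c -> x \in c -> y \in c -> x != y -> [disjoint cl x & cl y].
Proof. by case=> _; apply. Qed.

Lemma cell_vertex_edge c y e : cell c -> inr e \in c -> y \in cl (inr e) -> inl y \notin c.
Proof.
move=> cc ec ye; apply/negP => yc.
by apply: (disjointP _ _ (cell_disj cc ec yc isT) y ye); rewrite inE.
Qed.

Lemma unbl_in c v e : unbl c v e -> inl v \in c.
Proof. by case. Qed.

Lemma unbl_ev c v e : unbl c v e -> ev v e.
Proof. by case. Qed.

Lemma unbl_notin c v e : unbl c v e -> inr e \notin c.
Proof.
case=> _ _ _ H; apply/negP => /H /(_ isT) /disjointP /(_ (src e)).
by rewrite /= !inE eqxx; apply.
Qed.

Lemma unred_elred c v e : unbl c v e -> unred (elred c v e) e v = c.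
Proof.
move=> u; apply/setP => x; rewrite mem_unred mem_elred.
case: (eqVneq x (inl v)) => [->|xv] /=; first by rewrite (unbl_in u).
case: (eqVneq x (inr e)) => [->|xe] /=; first by rewrite (negbTE (unbl_notin u)).
by rewrite !orbF.
Qed.

Lemma elred_unred c y e : cell c -> inr e \in c -> ev y e -> elred (unred c e y) y e = c.
Proof.
move=> cc ec ye; apply/setP => x; rewrite mem_elred mem_unred.
case: (eqVneq x (inr e)) => [->|xe] /=; first by rewrite ec.
case: (eqVneq x (inl y)) => [->|xy] /=; last by rewrite !orbF.
by apply/esym/negbTE/(cell_vertex_edge cc ec (ev_mem ye)).
Qed.

Lemma cell_replace c x z : cell c -> x \in c -> z \notin c :\ x ->
  (forall w, w \in c -> w != x -> [disjoint cl z & cl w]) -> cell ((c :\ x) :|: [set z]).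
Proof.
move=> [cn disj] xc zn zdisj; split; first by rewrite card_replace.
move=> a b; rewrite !inE => /orP[/andP[ax ac]|/eqP->] /orP[/andP[bx bc]|/eqP->] ab.
- exact: disj.
- by rewrite disjoint_sym; apply: zdisj.
- exact: zdisj.
- by rewrite eqxx in ab.
Qed.

Lemma ev_cl_sub y e : ev y e -> cl (inl y) \subset cl (inr e).
Proof. by move=> ye; apply/subsetP => w; rewrite inE => /eqP->; apply: ev_mem. Qed.

Lemma unred_cell c e y : cell c -> inr e \in c -> ev y e ->
  [/\ cell (unred c e y), dim c = (dim (unred c e y)).+1 & unbl (unred c e y) y e].
Proof.
move=> cc ec ye; have yc := cell_vertex_edge cc ec (ev_mem ye).
have disj w : w \in c -> w != inr e -> [disjoint cl (inr e) & cl w].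
  by move=> wc we; apply: cell_disj cc ec wc _; rewrite eq_sym.
split.
- apply: cell_replace => //; first by rewrite inE negb_and yc orbT.
  by move=> w wc we; apply: disjointWl (ev_cl_sub ye) (disj w wc we).
- rewrite /dim (cardsD1 e) inE ec; congr (_.+1); apply: eq_card => e'.
  by rewrite !inE inr_eq orbF.
split=> //; first exact: ev_notstar ye.
  by rewrite mem_unred eqxx orbT.
move=> x; rewrite mem_unred => /orP[/andP[xe xc] _|/eqP-> ]; first exact: disj.
by rewrite eqxx.
Qed.

Lemma elred_cell c v e : cell c -> unbl c v e ->
  cell (elred c v e) /\ dim (elred c v e) = (dim c).+1.
Proof.
move=> cc u; have ec := unbl_notin u; split.
  apply: cell_replace (unbl_in u) _ _ => //; first by rewrite inE negb_and ec orbT.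
  by case: u => _ _ _; apply.
rewrite /dim; have -> : [set e' | inr e' \in elred c v e] = e |: [set e' | inr e' \in c].
  by apply/setP => e'; rewrite !inE inr_eq orbC.
by rewrite cardsU1 inE ec.
Qed.

Lemma regular_face_elred c v e : cell c -> unbl c v e -> regular_face V E src tgt c (elred c v e).
Proof.
move=> cc u; have ec := unbl_notin u; have vc := unbl_in u.
have nl := ev_noloop (unbl_ev u).
case: (unbl_ev u) => d0 [d0v _ _ d0e].
rewrite /regular_face; apply/eqP/cards1P; exists d0; apply/setP => d; rewrite !inE.
apply/andP/eqP => [[_ /eqP ce]|->]; last first.
  split; first by rewrite d0e eqxx orbT.
  by rewrite /replace_by d0e d0v -/(unred _ e v) unred_elred.
have de : d.1 = e.
  apply/eqP; apply: contraNT ec => ne.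
  by rewrite ce /replace_by !inE inr_eq eq_sym ne eqxx orbT.
have dv : dstart d = v.
  by move: vc; rewrite ce /replace_by !inE eqxx /= inl_eq => /eqP->.
by apply: (dir_eq (src := src) (tgt := tgt)); rewrite ?de ?d0e ?dv ?d0v.
Qed.

Lemma unred_comm c a b ya yb : a != b ->
  unred (unred c a ya) b yb = unred (unred c b yb) a ya.
Proof.
move=> ab; apply/setP => -[w|f]; rewrite !mem_unred ?inl_eq ?inr_eq /=; first by rewrite orbAC.
by rewrite !orbF andbCA.
Qed.

Lemma unbl_unred c e y u g : unbl c u g -> inr e \in c -> ev y e -> unbl (unred c e y) u g.
Proof.
case=> us uc uev udisj ec ye; split=> //; first by rewrite mem_unred uc.
move=> x; rewrite mem_unred => /orP[/andP[_ xc]|/eqP->] xu; first exact: udisj.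
by apply: disjointWr (ev_cl_sub ye) (udisj _ ec _).
Qed.

Lemma WiE i c c' : Wi i c c' <-> [/\ cell c, dim c = i, principal V E src tgt T star lab c c'
  & match i with 0 => True | j.+1 => ~ exists c0, Wi j c0 c end].
Proof. by case: i. Qed.

(* Minimality of [y] is what prevents [unred c e y] from being in the image of [W] itself. *)
Lemma in_W_image k c : cell c -> dim c = k.+1 ->
  (exists y e, [/\ inr e \in c, ev y e & forall u g, unbl (unred c e y) u g -> vle y u]) ->
  exists c0, Wi k c0 c.
Proof.
move=> cc dc Hex.
pose Q y := exists e, [/\ inr e \in c, ev y e & forall u g, unbl (unred c e y) u g -> vle y u].
have [y [[e [ec ye ymin_loc]] ymin]] : exists y, Q y /\ forall y', Q y' -> vle y y'.
  by apply: vle_min; case: Hex => y [e H]; exists y, e.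
have [uc ud uu] := unred_cell cc ec ye.
exists (unred c e y); apply/WiE; split=> //.
- by move: dc; rewrite ud => -[].
- by exists y, e; split=> //; rewrite elred_unred.
case: k dc ud => [//|j] dc ud [c0 /WiE [_ _ [y' [e' [u' m' c0e]]] _]].
have e'u : inr e' \in unred c e y by rewrite c0e mem_elred eqxx orbT.
move: (e'u); rewrite mem_unred inr_eq orbF => /andP[ne e'c].
have ye' := unbl_ev u'.
have c0E : c0 = unred (unred c e y) e' y' by rewrite c0e unred_elred.
have Qy' : Q y'.
  exists e'; split=> // u g ug; apply: (m' u g); rewrite c0E unred_comm 1?eq_sym //.
  by apply: unbl_unred ug _ ye; rewrite mem_unred inr_eq eq_sym ne ec.
have yy : y = y'.
  apply: vle_anti; first exact: ymin.
  by apply: (m' y e); rewrite c0E; apply: unbl_unred uu e'u ye'.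
by move: ne; rewrite yy in ye; rewrite (ev_fun ye ye') eqxx.
Qed.

Definition is_principal c v e := unbl c v e /\ forall w f, unbl c w f -> vle v w.

Lemma is_principal_uniq c v e v' e' :
  is_principal c v e -> is_principal c v' e' -> v = v' /\ e = e'.
Proof.
move=> [u m] [u' m']; have vv : v = v' by apply: vle_anti; [apply: m u' | apply: m' u].
by subst v'; split=> //; apply: ev_fun (unbl_ev u) (unbl_ev u').
Qed.

Lemma W_data c c' : W c c' -> exists v e, [/\ cell c, is_principal c v e & c' = elred c v e].
Proof. by move=> /WiE [cc _ [v [e [u m ce]]] _]; exists v, e. Qed.

Lemma W_not_image c c' k : W c c' -> dim c = k.+1 -> ~ exists c0, Wi k c0 c.
Proof. by move=> /WiE [_ _ _] + dc; rewrite dc. Qed.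

Lemma unbl_unred2 c ea eb ya yb u g : cell c -> inr ea \in c -> inr eb \in c -> ea != eb ->
  unbl (unred (unred c ea ya) eb yb) u g -> u != ya -> u != yb ->
  unbl (unred c ea ya) u g \/ unbl (unred c eb yb) u g.
Proof.
move=> cc ea_c eb_c ne [us uin uev udisj] uya uyb.
have uc : inl u \in c.
  by move: uin; rewrite !mem_unred !inl_eq (negbTE uya) (negbTE uyb) !orbF => /andP[_ /andP[]].
have u_ea : u \notin cl (inr ea) by apply: contraTN uc => /(cell_vertex_edge cc ea_c).
have u_eb : u \notin cl (inr eb) by apply: contraTN uc => /(cell_vertex_edge cc eb_c).
have disj x : x \in c -> x != inr ea -> x != inr eb -> x != inl u -> [disjoint cl (inr g) & cl x].
  by move=> xc xa xb; apply: udisj; rewrite !mem_unred xa xb xc.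
case: (boolP [disjoint cl (inr g) & cl (inr ea)]) => [ga|nga]; [right | left];
  (split=> //; first by rewrite mem_unred uc);
  move=> x; rewrite mem_unred => /orP[/andP[xe xc]|/eqP->] xu;
  try by apply: udisj => //; rewrite !mem_unred eqxx /= ?orbT ?andbT.
- by case: (eqVneq x (inr ea)) => [->//|xa]; apply: disj.
case: (eqVneq x (inr eb)) => [->|xb]; last exact: disj.
apply: ev_other_endpoint uev u_ea u_eb _ nga.
by apply: cell_disj cc ea_c eb_c _; rewrite inr_eq.
Qed.

Lemma W_unred2_undefined c ea eb ya yb t : cell c -> inr ea \in c -> inr eb \in c -> ea != eb ->
  ev ya ea -> ev yb eb ->
  (forall u g, unbl (unred c ea ya) u g -> vle yb u) ->
  (forall u g, unbl (unred c eb yb) u g -> vle yb u) ->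
  ~ W (unred c ea ya) t.
Proof.
move=> cc ea_c eb_c ne yaa ybb min_a min_b Wt.
have [ca dca ua] := unred_cell cc ea_c yaa.
have eb_a : inr eb \in unred c ea ya by rewrite mem_unred inr_eq eq_sym ne eb_c.
have [k dk] : exists k, dim (unred c ea ya) = k.+1.
  have : 0 < dim (unred c ea ya) by apply/card_gt0P; exists eb; rewrite inE.
  by case: dim => // k _; exists k.
apply: (W_not_image Wt dk); apply: (in_W_image ca dk); exists yb, eb; split=> // u g ug.
case: (eqVneq u ya) => [->|uya]; first exact: min_a ua.
case: (eqVneq u yb) => [->|uyb]; first exact: vle_refl.
by case: (unbl_unred2 cc ea_c eb_c ne ug uya uyb); [apply: min_a | apply: min_b].
Qed.

Lemma W_image_principal c1 c2 c' v1 e1 v2 e2 :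
  W c1 c' -> is_principal c1 v1 e1 -> c' = elred c1 v1 e1 ->
  cell c2 -> is_principal c2 v2 e2 -> c' = elred c2 v2 e2 -> vle v2 v1 -> v1 = v2.
Proof.
move=> W1 [u1 m1] ce1 cc2 [u2 m2] ce2 l; case: (eqVneq v1 v2) => // nv; exfalso.
have ne : e1 != e2.
  by apply: contraNneq nv => ee; subst e2; apply/eqP/(ev_inj (unbl_ev u1) (unbl_ev u2)).
have cc' : cell c' by rewrite ce2; case: (elred_cell cc2 u2).
have e1c' : inr e1 \in c' by rewrite ce1 mem_elred eqxx orbT.
have e2c' : inr e2 \in c' by rewrite ce2 mem_elred eqxx orbT.
have c1E : unred c' e1 v1 = c1 by rewrite ce1 unred_elred.
have c2E : unred c' e2 v2 = c2 by rewrite ce2 unred_elred.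
rewrite -c1E in W1; apply: (W_unred2_undefined cc' e1c' e2c' ne (unbl_ev u1) (unbl_ev u2) _ _ W1).
  by rewrite c1E => u g /m1 /(vle_trans l).
by rewrite c2E.
Qed.

Lemma W_inj c1 c2 c' : W c1 c' -> W c2 c' -> c1 = c2.
Proof.
move=> W1 W2.
have [v1 [e1 [cc1 p1 ce1]]] := W_data W1; have [v2 [e2 [cc2 p2 ce2]]] := W_data W2.
have vv : v1 = v2.
  case: (vle_total v2 v1) => l; first exact: W_image_principal W1 p1 ce1 cc2 p2 ce2 l.
  by apply/esym/(W_image_principal W2 p2 ce2 cc1 p1 ce1 l).
subst v2; have ee : e1 = e2 := ev_fun (unbl_ev p1.1) (unbl_ev p2.1); subst e2.
by rewrite -(unred_elred p1.1) -(unred_elred p2.1) -ce1 -ce2.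
Qed.

Lemma face_codim1 s' t : face V E src tgt s' t -> dim t = (dim s').+1 ->
  exists f b, inr f \in t /\ s' = unred t f (dstart (f, b)).
Proof.
case=> S [b [St s'e]] dt.
have inr_S e : ((inr e : X) \in [set (inr x : X) | x in S]) = (e \in S).
  by apply/imsetP/idP => [[x xS [->]]//|eS]; exists e.
have edges_s' : [set e | inr e \in s'] = [set e | inr e \in t] :\: S.
  have inr_notin e : ((inr e : X) \in [set (inl (dstart (x, b x)) : X) | x in S]) = false.
    by apply/imsetP => -[].
  by apply/setP => e; rewrite s'e !inE inr_S inr_notin orbF andbC.
have sub : S \subset [set e | inr e \in t] by apply/subsetP => e /St; rewrite inE.
have /cards1P[f Sf] : #|S| == 1.
  move: dt; rewrite /dim edges_s' cardsD (setIidPr sub) => /eqP.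
  by have := subset_leq_card sub; lia.
exists f, (b f); split; first by apply: St; rewrite Sf inE.
by rewrite s'e Sf !imset_set1.
Qed.

Definition evb y e : bool :=
  [exists d : E * bool, [&& dstart d == y, lab d == 0, d.1 \in T & d.1 == e]].

Lemma evP y e : reflect (ev y e) (evb y e).
Proof.
apply: (iffP existsP) => [[d /and4P[/eqP a /eqP b c /eqP d']]|[d [a b c d']]].
  by exists d.
by exists d; rewrite a b c d' !eqxx.
Qed.

Definition phi (x : X) : nat :=
  match x with
  | inl v => (depth v).*2
  | inr e => (maxn (depth (src e)) (depth (tgt e))).*2 + ~~ [exists y, evb y e]
  end.

Definition Phi (c : {set X}) : nat := \sum_(x in c) phi x.

Lemma Phi_D1 (A : {set X}) x : x \in A -> Phi A = phi x + Phi (A :\ x).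
Proof.
move=> xA; rewrite /Phi (bigD1 x) //=; congr (_ + _).
by apply: eq_bigl => z; rewrite !inE andbC.
Qed.

Lemma Phi_replace (A : {set X}) x z : x \in A -> z \notin A :\ x ->
  Phi ((A :\ x) :|: [set z]) + phi x = Phi A + phi z.
Proof.
move=> xA zA; rewrite (Phi_D1 xA) (@Phi_D1 _ z) ?inE ?eqxx ?orbT //.
suff -> : ((A :\ x) :|: [set z]) :\ z = A :\ x by lia.
apply/setP => y; rewrite !inE; case: (eqVneq y z) => [->|] /=; last by rewrite orbF.
by apply/esym/negbTE; rewrite -in_setD1.
Qed.

Lemma phi_ev y e : ev y e -> phi (inr e) = (depth y).*2.
Proof.
move=> ye /=; have -> : [exists y, evb y e] by apply/existsP; exists y; apply/evP.
case/ev_endpoints: (ye) => p [ce hp]; rewrite addn0; have := ev_noloop ye.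
have : src e \in [set y; p] /\ tgt e \in [set y; p] by rewrite -ce !inE !eqxx orbT.
rewrite !inE => -[/orP[]/eqP-> /orP[]/eqP->]; rewrite ?eqxx // => _.
- by rewrite (maxn_idPl (ltnW hp)).
- by rewrite (maxn_idPr (ltnW hp)).
Qed.

Lemma phi_endpoint f z : z \in cl (inr f) -> (depth z).*2 <= phi (inr f).
Proof.
move=> zf; apply: leq_trans (leq_addr _ _); rewrite leq_double.
by move: zf; rewrite !inE => /orP[] /eqP->; [apply: leq_maxl | apply: leq_maxr].
Qed.

Lemma phi_endpoint_eq f z : z \in cl (inr f) -> phi (inr f) = (depth z).*2 -> ev z f.
Proof.
move=> zf; case ef : [exists y, evb y f]; last first.
  by move/(congr1 odd); rewrite /= ef addn1 /= !odd_double.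
case/existsP: ef => y /evP yf; rewrite (phi_ev yf) => /(can_inj doubleK) hz.
case/ev_endpoints: (yf) zf => p [-> hp]; rewrite !inE => /orP[/eqP->//|/eqP zp].
by move: hp; rewrite hz zp ltnn.
Qed.

Lemma Phi_elred c v e : unbl c v e -> Phi (elred c v e) = Phi c.
Proof.
move=> u; apply/(@addnI (phi (inl v))); rewrite addnC Phi_replace ?(unbl_in u) //.
  by rewrite (phi_ev (unbl_ev u)) addnC.
by rewrite inE negb_and (unbl_notin u) orbT.
Qed.

Lemma W_face_Phi s t s' : W s t -> face V E src tgt s' t -> dim s' = dim s -> s' <> s ->
  Phi s' <= Phi s /\
  (Phi s' = Phi s -> exists v e y f,
     [/\ is_principal s v e, s' = unred (elred s v e) f y, ev y f, f != e
        & inr f \in elred s v e]).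
Proof.
move=> Ws fc ds ns; have [v [e [cs ps te]]] := W_data Ws.
have [ct dt] := elred_cell cs ps.1; rewrite -te in ct dt.
have [f [b [ft s'e]]] := face_codim1 fc (etrans dt (congr1 S (esym ds))).
set z := dstart (f, b) in s'e.
have zf : z \in cl (inr f) by rewrite (cl_dir src tgt (f, b)) !inE eqxx.
have zt : inl z \notin t :\ inr f by rewrite inE negb_and (cell_vertex_edge ct ft zf) orbT.
have PhiE : Phi s' + phi (inr f) = Phi s + (depth z).*2.
  by rewrite s'e Phi_replace // te (Phi_elred ps.1).
split=> [|eq]; first by have := phi_endpoint zf; lia.
have zf_ev : ev z f by apply: (phi_endpoint_eq zf); lia.
exists v, e, z, f; split=> //; rewrite -?te //.
apply/eqP => fe; subst f; apply: ns.
by rewrite s'e (ev_inj zf_ev (unbl_ev ps.1)) te (unred_elred ps.1).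
Qed.

Lemma principal_not_le s v e y f s' t' v' e' : cell s -> is_principal s v e ->
  s' = unred (elred s v e) f y -> ev y f -> f != e -> inr f \in elred s v e ->
  W s' t' -> is_principal s' v' e' -> ~ vle v v'.
Proof.
move=> cs [us ms] -> yf fe ft Ws' [_ ms'] l.
have [ct _] := elred_cell cs us.
have et : inr e \in elred s v e by rewrite mem_elred eqxx orbT.
apply: (W_unred2_undefined ct ft et fe yf (unbl_ev us) _ _ Ws').
  by move=> u g /ms' /(vle_trans l).
by rewrite unred_elred.
Qed.

Lemma W_move_key_lt s t s' t' v e v' e' :
  W s t -> face V E src tgt s' t -> dim s' = dim s -> s' <> s -> Phi s' = Phi s ->
  W s' t' -> is_principal s v e -> is_principal s' v' e' -> (key v' < key v)%O.
Proof.
move=> Ws fc ds ns eq Ws' pv pv'; have [_ /(_ eq)] := W_face_Phi Ws fc ds ns.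
case=> v0 [e0 [y [f [p0 s'e yf fe ft]]]]; have [<- _] := is_principal_uniq p0 pv.
have [_ [_ [cs _ _]]] := W_data Ws.
rewrite ltNge; apply/negP => /vle_key; exact: principal_not_le cs p0 s'e yf fe ft Ws' pv'.
Qed.

Lemma closed_path_W_moves r (s : nat -> {set X}) : 0 < r -> s r = s 0 -> s 1 <> s 0 ->
  (forall i, i < r -> wstep V E src tgt W (s i) (s i.+1)) ->
  forall i, i < r -> exists t, [/\ W (s i) t, s i.+1 <> s i & face V E src tgt (s i.+1) t].
Proof.
move=> r0 er e1 steps i ir; case: (steps i ir) => [[noW ei]|//]; exfalso.
have stays k : i + k <= r -> s (i + k) = s i.
  elim: k => [|k IH] ik; first by rewrite addn0.
  have ik' : i + k < r by rewrite addnS in ik.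
  rewrite addnS; case: (steps _ ik') => [[_ ->]|[t [Wt _ _]]]; first exact: IH (ltnW ik').
  by rewrite (IH (ltnW ik')) in Wt; case: (noW t).
have sr : s r = s i by rewrite -(stays (r - i)) ?subnKC ?(ltnW ir).
case: (steps 0 r0) => [[_ e0]|[t [Wt _ _]]]; first exact: e1.
by rewrite -er sr in Wt; case: (noW t).
Qed.

Lemma no_nonstat_closed_path : ~ nonstat_closed_path V E src tgt n W.
Proof.
case=> p [r [s [r0 cells er e1 steps]]].
have moves := closed_path_W_moves r0 er e1 steps.
have dim_step i : i < r -> dim (s i.+1) = dim (s i).
  by move=> ir; rewrite (cells _ ir).2 (cells _ (ltnW ir)).2.
have W_def i : i <= r -> exists t, W (s i) t.
  rewrite leq_eqVlt => /orP[/eqP->|/moves[t [Wt _ _]]]; last by exists t.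
  by rewrite er; have [t [Wt _ _]] := moves 0 r0; exists t.
have has_principal i : i <= r -> exists v e, is_principal (s i) v e.
  by case/W_def=> t /W_data[v [e [_ pv _]]]; exists v, e.
have Phi_const : forall i, i < r -> Phi (s i.+1) = Phi (s i).
  apply: nonincreasing_closed_const (congr1 Phi er) => i ir.
  by have [t [Wt ne fc]] := moves i ir; case: (W_face_Phi Wt fc (dim_step i ir) ne).
have key_desc i v e v' e' :
    i < r -> is_principal (s i) v e -> is_principal (s i.+1) v' e' -> (key v' < key v)%O.
  move=> ir; have [t [Wt ne fc]] := moves i ir; have [t' Wt'] := W_def _ ir.
  exact: W_move_key_lt Wt fc (dim_step i ir) ne (Phi_const i ir) Wt'.
have desc k : 0 < k -> k <= r ->
    forall v e w f, is_principal (s k) v e -> is_principal (s 0) w f -> (key v < key w)%O.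
  elim: k => [//|k IH] _ kr v e w f pk p0.
  have [v' [e' pk']] := has_principal k (ltnW kr).
  have lt := key_desc k _ _ _ _ kr pk' pk.
  case: k IH kr pk pk' lt => [|k] IH kr pk pk' lt; first by have [<- _] := is_principal_uniq pk' p0.
  exact: lt_trans lt (IH isT (ltnW kr) _ _ _ _ pk' p0).
have [w [f p0]] := has_principal 0 (leq0n r).
have pr : is_principal (s r) w f by rewrite er.
by have := desc r r0 (leqnn r) w f w f pr p0; rewrite ltxx.
Qed.

Lemma W_dgvf : dgvf V E src tgt n W.
Proof.
split.
- move=> c c' /W_data [v [e [cc [u _] ->]]]; have [cc' dc] := elred_cell cc u.
  by split=> //; apply: regular_face_elred.
- move=> c c1 c2 /W_data [v1 [e1 [_ p1 ->]]] /W_data [v2 [e2 [_ p2 ->]]].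
  by have [-> ->] := is_principal_uniq p1 p2.
- exact: W_inj.
- move=> a b c Wab Wbc; have [v [e [ca [u _] be]]] := W_data Wab.
  have [_ db] := elred_cell ca u; rewrite -be in db.
  by apply: (W_not_image Wbc db); exists a.
- exact: no_nonstat_closed_path.
Qed.

End Cells.

End Tree.

Theorem mainTheorem9 (V E : finType) (src tgt : E -> V) (T : {set E}) (star : V)
    (lab : E * bool -> nat) (n : nat) :
  0 < n ->
  connected V E src tgt [set: E] ->
  spanning_tree V E src tgt T ->
  #|[set d : E * bool | (dstart V E src tgt d == star) && (d.1 \in T)]| = 1 ->
  valid_lab V E src tgt T star lab ->
  ~ nonstat_closed_path V E src tgt n (W V E src tgt T star lab n) /\
  dgvf V E src tgt n (W V E src tgt T star lab n).
Proof.
move=> _ _ [Tconn _] _ Hlab.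
by split; [apply: no_nonstat_closed_path | apply: W_dgvf].
Qed.
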